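(* Let $\lambda>0$ and let $\Sigma\in\mathbb{R}^{d\times d}$ be symmetric positive definite with simple spectrum $\sigma_1>\sigma_2>\cdots>\sigma_d>0$ and associated unit eigenvectors $u_1,\dots,u_d$. Define $\mathcal{R}_{\mathrm{soft},\infty}:\mathbb{R}^d\to\mathbb{R}$ by \[ \mathcal{R}_{\mathrm{soft},\infty}(\mu)=\operatorname{tr}(\Sigma)-2\lambda\,\mu^\top\Sigma^2\mu+\lambda^2(\mu^\top\Sigma\mu)(\mu^\top\Sigma^2\mu). \] Then all critical points of $\mathcal{R}_{\mathrm{soft},\infty}$ are nondegenerate, and \[ \mathrm{crit}(\mathcal{R}_{\mathrm{soft},\infty})=\{0\}\cup\Big\{\pm\tfrac{1}{\sqrt{\lambda\sigma_j}}u_j:\ j=1,\dots,d\Big\}. \] Moreover: (1) $0$ is a strict local maximum; (2) for $j=2,\dots,d$, the points $\pm\frac{1}{\sqrt{\lambda\sigma_j}}u_j$ are strict saddles; (3) the points $\pm\frac{1}{\sqrt{\lambda\sigma_1}}u_1$ are global minimizers of $\mathcal{R}_{\mathrm{soft},\infty}$.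
   Context: $\mathcal{R}_{\mathrm{soft},\infty}(\mu)$ equals $\mathbb{E}\big[\|X-\lambda\Sigma\mu\mu^\top X\|^2\big]$ for $X\sim\mathcal{N}(0,\Sigma)$, the population risk of the infinite-prompt limit of a rank-one softmax attention layer. A critical point is nondegenerate if the Hessian there is invertible; a strict saddle is a critical point whose Hessian has a negative eigenvalue and which is not a local minimum. *)

From HB Require Import structures.
From mathcomp Require Import all_boot all_order all_algebra.
From mathcomp Require Import all_classical all_reals all_analysis.
Set Implicit Arguments. Unset Strict Implicit. Unset Printing Implicit Defensive.
Import Order.TTheory GRing.Theory Num.Theory.
Import numFieldNormedType.Exports.
Local Open Scope ring_scope.

Definition qf {R : pzRingType} {d : nat} (A : 'M[R]_d) (x : 'cV[R]_d) : R :=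
  (x^T *m A *m x) 0 0.

Definition R_soft {R : realType} {d : nat} (lam : R) (Sigma : 'M[R]_d)
  (mu : 'cV[R]_d) : R :=
  \tr Sigma - 2 * lam * qf (Sigma *m Sigma) mu
  + lam ^+ 2 * (qf Sigma mu * qf (Sigma *m Sigma) mu).

Definition e_ {R : realType} {d : nat} (i : 'I_d) : 'cV[R]_d := delta_mx i 0.

Definition partial {R : realType} {d : nat} (i : 'I_d)
  (f : 'cV[R]_d -> R) (x : 'cV[R]_d) : R := 'D_(e_ i) f x.

Definition grad {R : realType} {d : nat} (f : 'cV[R]_d -> R) (x : 'cV[R]_d)
  : 'cV[R]_d := \col_i partial i f x.

Definition hessian {R : realType} {d : nat} (f : 'cV[R]_d -> R) (x : 'cV[R]_d)
  : 'M[R]_d := \matrix_(i, j) partial i (partial j f) x.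

Definition critical_point {R : realType} {d : nat} (f : 'cV[R]_d -> R)
  (x : 'cV[R]_d) : Prop := grad f x = 0.

Definition nondegenerate_crit {R : realType} {d : nat} (f : 'cV[R]_d -> R)
  (x : 'cV[R]_d) : Prop := critical_point f x /\ hessian f x \in unitmx.

Definition local_min {R : realType} {d : nat} (f : 'cV[R]_d -> R)
  (x : 'cV[R]_d) : Prop := \forall y \near x, f x <= f y.

Definition strict_local_max {R : realType} {d : nat} (f : 'cV[R]_d -> R)
  (x : 'cV[R]_d) : Prop := \forall y \near x, y != x -> f y < f x.

Definition strict_saddle {R : realType} {d : nat} (f : 'cV[R]_d -> R)
  (x : 'cV[R]_d) : Prop :=
  [/\ critical_point f x,
      (exists a : R, a < 0 /\ eigenvalue (hessian f x) a)
    & ~ local_min f x].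

Definition global_min {R : realType} {d : nat} (f : 'cV[R]_d -> R)
  (x : 'cV[R]_d) : Prop := forall y, f x <= f y.

From HB Require Import structures.
From mathcomp Require Import all_boot all_order all_algebra.
From mathcomp Require Import all_classical all_reals all_analysis.
From mathcomp Require Import ring lra.
Import Order.TTheory GRing.Theory Num.Theory.
Import numFieldNormedType.Exports.
Set Implicit Arguments. Unset Strict Implicit. Unset Printing Implicit Defensive.
Local Open Scope ring_scope.
Local Open Scope classical_set_scope.

(* In the orthonormal eigenbasis [u] of [Sigma], write [c_i = u_i^T mu],
   [b = mu^T Sigma mu = sum_i sigma_i c_i^2] and [a = mu^T Sigma^2 mu = sum_i sigma_i^2 c_i^2].
   All derivatives are read off the exact polynomial expansion of the risk along lines.
   The gradient has coordinates [2 lam c_i sigma_i ((lam b - 2) sigma_i + lam a)]; at a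
   critical point [mu <> 0] we have [a > 0], so the affine map [t |-> (lam b - 2) t + lam a]
   vanishes at no more than one of the distinct [sigma_i]: [mu = s u_j], and then
   [lam sigma_j s^2 = 1].  The Hessian is diagonal in the eigenbasis, with eigenvalues
   [-4 lam sigma_k^2] at [0] and, at [s u_j], [2 lam sigma_k (sigma_j - sigma_k)] for [k <> j]
   and [8 lam sigma_j^2] for [k = j]: none vanishes, and if [sigma_k > sigma_j] the risk
   decreases like [lam sigma_k (sigma_k - sigma_j) h^2] along [s u_j + h u_k].  Finally
   [sigma_1 (R(mu) - R(p_1)) = (lam a - sigma_1)^2 + lam^2 a (sigma_1 b - a) >= 0]
   because [a <= sigma_1 b]. *)

Lemma derive_poly_increment (R : realType) (V : normedModType R) (f : V -> R)
    (x v : V) (p : {poly R}) :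
  (forall h, f (h *: v + x) - f x = h * p.[h]) -> 'D_v f x = p.[0].
Proof.
move=> fE; rewrite /derive; apply: cvg_lim => //.
apply: (@cvg_trans _ (horner p @ 0^')); last first.
  by apply: cvg_within_filter; exact: continuous_horner.
apply: near_eq_cvg; near=> h.
have h0 : h != 0 by near: h; exact: nbhs_dnbhs_neq.
by rewrite /= fE /GRing.scale /= mulKf.
Unshelve. all: by end_near. Qed.

Lemma not_local_min_quartic (R : realType) (V : normedModType R) (f : V -> R)
    (x v : V) (q1 q3 : R) :
  q1 < 0 -> (forall h, f (h *: v + x) - f x = h ^+ 2 * (q1 + h ^+ 2 * q3)) ->
  ~ \forall y \near x, f x <= f y.
Proof.
move=> q1_lt0 fE x_min.
have line_x : (fun h : R => h *: v + x) @ 0 --> x.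
  suff : (fun h : R => h *: v + x) @ 0 --> 0 *: v + x by rewrite scale0r add0r.
  by apply: cvgD; [exact: cvgZr_tmp | exact: cvg_cst].
have quartic0 : (fun h : R => h ^+ 2 * q3) @ 0 --> 0.
  suff : (fun h : R => h ^+ 2 * q3) @ 0 --> 0 ^+ 2 * q3 by rewrite expr0n mul0r.
  by apply: cvgM; [exact: exprn_continuous | exact: cvg_cst].
suff : \forall h \near (0 : R)^', False by move=> /filter_ex [].
near=> h.
have h0 : h != 0 by near: h; exact: nbhs_dnbhs_neq.
have : f x <= f (h *: v + x).
  by near: h; apply: nbhs_dnbhs; exact: (line_x _ x_min).
have : h ^+ 2 * q3 < - q1.
  by near: h; apply: nbhs_dnbhs; apply: (cvgr_lt _ quartic0); rewrite oppr_gt0.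
have := fE h; have : 0 < h ^+ 2 by rewrite exprn_even_gt0.
nra.
Unshelve. all: by end_near. Qed.

Lemma mulr_sqr_eq1P (R : rcfType) (a s : R) : 0 < a ->
  a * s ^+ 2 = 1 <-> s = (Num.sqrt a)^-1 \/ s = - (Num.sqrt a)^-1.
Proof.
move=> a_gt0; have sqrt_a : Num.sqrt a ^+ 2 = a by rewrite sqr_sqrtr ?ltW.
have sqrt_a0 : Num.sqrt a != 0 by rewrite sqrtr_eq0 -ltNge.
split=> [sE | [] ->]; last 2 first.
- by rewrite exprVn sqrt_a mulfV ?gt_eqF.
- by rewrite sqrrN exprVn sqrt_a mulfV ?gt_eqF.
have : s ^+ 2 = (Num.sqrt a)^-1 ^+ 2.
  apply: (@mulfI _ a); first by rewrite gt_eqF.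
  by rewrite sE exprVn sqrt_a mulfV ?gt_eqF.
by move/eqP; rewrite eqf_sqr => /orP [] /eqP; [left | right].
Qed.

Section QuadraticForm.
Variables (R : comPzRingType) (d : nat).
Implicit Types (M : 'M[R]_d) (x y v w : 'cV[R]_d).

Definition bform M x y : R := (x^T *m M *m y) 0 0.

Lemma bformC M x y : M^T = M -> bform M x y = bform M y x.
Proof.
move=> M_sym; have -> : bform M x y = (x^T *m M *m y)^T 0 0 by rewrite mxE.
by rewrite !trmx_mul trmxK M_sym mulmxA.
Qed.

Lemma bform_shiftl M h v x y : bform M (h *: v + x) y = h * bform M v y + bform M x y.
Proof. by rewrite /bform linearD linearZ /= !mulmxDl -!scalemxAl !mxE. Qed.

Lemma bform_shiftr M h v x y : bform M x (h *: v + y) = h * bform M x v + bform M x y.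
Proof. by rewrite /bform mulmxDr -scalemxAr !mxE. Qed.

Lemma qf_shift M h v x : M^T = M ->
  qf M (h *: v + x) = h ^+ 2 * qf M v + 2 * h * bform M v x + qf M x.
Proof.
move=> M_sym; rewrite /qf -!/(bform _ _ _) bform_shiftl !bform_shiftr.
by rewrite (bformC x v M_sym); ring.
Qed.

Lemma qfZ M s x : qf M (s *: x) = s ^+ 2 * qf M x.
Proof. by rewrite /qf -scalemxAr [(s *: x)^T]linearZ /= -!scalemxAl scalerA mxE expr2. Qed.

Lemma qf0 M : qf M 0 = 0.
Proof. by rewrite /qf mulmx0 mxE. Qed.

Lemma mulmx_shiftE M h v x i :
  (M *m (h *: v + x)) i 0 = h * (M *m v) i 0 + (M *m x) i 0.
Proof. by rewrite mulmxDr -scalemxAr !mxE. Qed.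

Lemma mul_col_trmx_mul y z w : y *m z^T *m w = (z^T *m w) 0 0 *: y.
Proof. by rewrite -mulmxA {1}(mx11_scalar (z^T *m w)) mul_mx_scalar. Qed.

End QuadraticForm.

Lemma continuous_qf (R : realType) (d : nat) (M : 'M[R]_d) : continuous (qf M).
Proof.
have -> : qf M = fun x => \sum_k \sum_l x l 0 * M l k * x k 0.
  apply/funext => x; rewrite /qf mxE; apply: eq_bigr => k _.
  by rewrite mxE big_distrl; apply: eq_bigr => l _; rewrite !mxE.
move=> x; apply: (@cvg_big _ _ +%R 0 xpredT add_continuous _ (nbhs x)) => // k _.
apply: (@cvg_big _ _ +%R 0 xpredT add_continuous _ (nbhs x)) => // l _.
apply: cvgM; last exact: coord_continuous.
by apply: cvgM; [exact: coord_continuous | exact: cvg_cst].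
Qed.

Section RSoftDerivatives.
Variables (R : realType) (d : nat) (lam : R) (Sigma : 'M[R]_d).
Hypothesis Sigma_sym : Sigma^T = Sigma.
Local Notation S2 := (Sigma *m Sigma).
Local Notation f := (R_soft lam Sigma).

Lemma Sigma2_sym : S2^T = S2.
Proof. by rewrite trmx_mul Sigma_sym. Qed.

Lemma bform_e (M : 'M[R]_d) i x : bform M (e_ i) x = (M *m x) i 0.
Proof. by rewrite /bform /e_ trmx_delta -mulmxA -rowE mxE. Qed.

Lemma mulmx_eE (M : 'M[R]_d) i j : (M *m e_ i) j 0 = M j i.
Proof. by rewrite /e_ -colE mxE. Qed.

Lemma R_soft_shift h v x :
  f (h *: v + x) - f x = h * (Poly [::
    2 * lam * (lam * (qf Sigma x * bform S2 v x + bform Sigma v x * qf S2 x)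
               - 2 * bform S2 v x);
    lam * (lam * (qf Sigma x * qf S2 v + 4 * bform Sigma v x * bform S2 v x
                  + qf Sigma v * qf S2 x) - 2 * qf S2 v);
    2 * lam ^+ 2 * (bform Sigma v x * qf S2 v + qf Sigma v * bform S2 v x);
    lam ^+ 2 * qf Sigma v * qf S2 v]).[h].
Proof. by rewrite /R_soft horner_Poly /= !qf_shift ?Sigma2_sym //; ring. Qed.

Definition R_soft_grad x : 'cV[R]_d :=
  (2 * lam) *: ((lam * qf Sigma x - 2) *: (S2 *m x) + (lam * qf S2 x) *: (Sigma *m x)).

Lemma R_soft_gradE x i : R_soft_grad x i 0 =
  2 * lam * ((lam * qf Sigma x - 2) * (S2 *m x) i 0 + lam * qf S2 x * (Sigma *m x) i 0).
Proof. by rewrite !mxE. Qed.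

Lemma partial_R_soft i x : partial i f x = R_soft_grad x i 0.
Proof.
rewrite /partial (derive_poly_increment (fun h => R_soft_shift h (e_ i) x)).
by rewrite horner_Poly /= R_soft_gradE !bform_e; ring.
Qed.

Lemma grad_R_soft x : grad f x = R_soft_grad x.
Proof. by apply/matrixP => i k; rewrite mxE (ord1 k) partial_R_soft. Qed.

Lemma R_soft_grad_shift h v x i :
  R_soft_grad (h *: v + x) i 0 - R_soft_grad x i 0 = h * (Poly [::
    2 * lam * ((lam * qf Sigma x - 2) * (S2 *m v) i 0
               + 2 * lam * bform Sigma v x * (S2 *m x) i 0
               + lam * qf S2 x * (Sigma *m v) i 0
               + 2 * lam * bform S2 v x * (Sigma *m x) i 0);
    2 * lam ^+ 2 * (2 * bform Sigma v x * (S2 *m v) i 0 + qf Sigma v * (S2 *m x) i 0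
                    + 2 * bform S2 v x * (Sigma *m v) i 0 + qf S2 v * (Sigma *m x) i 0);
    2 * lam ^+ 2 * (qf Sigma v * (S2 *m v) i 0 + qf S2 v * (Sigma *m v) i 0)]).[h].
Proof.
rewrite horner_Poly /= !R_soft_gradE !mulmx_shiftE !qf_shift ?Sigma2_sym //.
ring.
Qed.

Definition R_soft_hess x : 'M[R]_d :=
  (2 * lam) *: ((lam * qf Sigma x - 2) *: S2 + (lam * qf S2 x) *: Sigma
    + (2 * lam) *: (Sigma *m x *m (S2 *m x)^T + S2 *m x *m (Sigma *m x)^T)).

Lemma hessian_R_soft x : hessian f x = (R_soft_hess x)^T.
Proof.
apply/matrixP => i j; rewrite [LHS]mxE.
have -> : partial j f = fun y => R_soft_grad y j 0.
  by apply/funext => y; exact: partial_R_soft.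
rewrite /partial.
rewrite (derive_poly_increment (fun h => R_soft_grad_shift h (e_ i) x j)).
rewrite horner_Poly /= !bform_e !mulmx_eE [RHS]mxE /R_soft_hess.
rewrite !mxE !big_ord1 !mxE.
ring.
Qed.

End RSoftDerivatives.

Section Eigenbasis.
Variables (R : fieldType) (d : nat) (Sigma : 'M[R]_d).
Variables (sigma : 'I_d -> R) (u : 'I_d -> 'cV[R]_d).
Hypothesis Sigma_sym : Sigma^T = Sigma.
Hypothesis sigma_inj : injective sigma.
Hypothesis Sigma_u : forall i, Sigma *m u i = sigma i *: u i.
Hypothesis u_norm : forall i, ((u i)^T *m u i) 0 0 = 1.
Implicit Types (x y z : 'cV[R]_d).

Definition ucoord i x : R := ((u i)^T *m x) 0 0.

Lemma ucoordD i x y : ucoord i (x + y) = ucoord i x + ucoord i y.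
Proof. by rewrite /ucoord mulmxDr mxE. Qed.

Lemma ucoordZ i s x : ucoord i (s *: x) = s * ucoord i x.
Proof. by rewrite /ucoord -scalemxAr mxE. Qed.

Lemma ucoord0 i : ucoord i 0 = 0.
Proof. by rewrite /ucoord mulmx0 mxE. Qed.

Lemma bform_u M i x : bform M (u i) x = ucoord i (M *m x).
Proof. by rewrite /bform -mulmxA. Qed.

Lemma trmx_u_mul i : (u i)^T *m Sigma = sigma i *: (u i)^T.
Proof. by rewrite -{1}Sigma_sym -trmx_mul Sigma_u linearZ. Qed.

Lemma ucoord_Sigma i x : ucoord i (Sigma *m x) = sigma i * ucoord i x.
Proof. by rewrite /ucoord mulmxA trmx_u_mul -scalemxAl mxE. Qed.

Lemma ucoord_Sigma2 i x : ucoord i (Sigma *m Sigma *m x) = sigma i ^+ 2 * ucoord i x.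
Proof. by rewrite -mulmxA !ucoord_Sigma mulrA expr2. Qed.

Lemma Sigma2_u i : Sigma *m Sigma *m u i = sigma i ^+ 2 *: u i.
Proof. by rewrite -mulmxA Sigma_u -scalemxAr Sigma_u scalerA expr2. Qed.

Lemma ucoord_u i j : ucoord i (u j) = (i == j)%:R.
Proof.
case: eqVneq => [<-|neq_ij]; first exact: u_norm.
have : sigma i * ucoord i (u j) = sigma j * ucoord i (u j).
  by rewrite -ucoord_Sigma Sigma_u ucoordZ.
move/eqP; rewrite -subr_eq0 -mulrBl mulf_eq0 subr_eq0.
by rewrite (inj_eq sigma_inj) (negPf neq_ij) => /eqP.
Qed.

Lemma u_neq0 i : u i != 0.
Proof. by apply: contra_neq (oner_neq0 R) => ui0; rewrite -(u_norm i) ui0 mulmx0 mxE. Qed.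

Lemma qf_Sigma_u i : qf Sigma (u i) = sigma i.
Proof. by rewrite /qf -mulmxA -/(ucoord i _) ucoord_Sigma ucoord_u eqxx mulr1. Qed.

Lemma qf_Sigma2_u i : qf (Sigma *m Sigma) (u i) = sigma i ^+ 2.
Proof. by rewrite /qf -mulmxA -/(ucoord i _) ucoord_Sigma2 ucoord_u eqxx mulr1. Qed.

Definition Umx : 'M[R]_d := \matrix_(k, i) u i k 0.

Lemma trmx_Umx_mulE i x : (Umx^T *m x) i 0 = ucoord i x.
Proof. by rewrite /ucoord !mxE; apply: eq_bigr => k _; rewrite !mxE. Qed.

Lemma Umx_orthogonal : Umx^T *m Umx = 1%:M.
Proof.
apply/matrixP => i j.
have -> : (Umx^T *m Umx) i j = (Umx^T *m u j) i 0.
  by rewrite !mxE; apply: eq_bigr => k _; rewrite !mxE.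
by rewrite trmx_Umx_mulE ucoord_u mxE.
Qed.

Lemma ucoord_decomp x : x = \sum_i ucoord i x *: u i.
Proof.
apply/matrixP => k l; rewrite (ord1 l).
rewrite -[x in LHS]mul1mx -(mulmx1C Umx_orthogonal) -mulmxA [LHS]mxE summxE.
by apply: eq_bigr => i _; rewrite [RHS]mxE mulrC [Umx k i]mxE trmx_Umx_mulE.
Qed.

Lemma ucoord_neq0 x : x != 0 -> exists i, ucoord i x != 0.
Proof.
move=> x_neq0; case: (boolP [exists i, ucoord i x != 0]) => [/existsP // | ].
rewrite negb_exists => /forallP x0; move/eqP: x_neq0; case.
by rewrite (ucoord_decomp x) big1 // => i _; rewrite (eqP (negPn (x0 i))) scale0r.
Qed.

Lemma dot_ucoord y z : (y^T *m z) 0 0 = \sum_i ucoord i y * ucoord i z.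
Proof.
have -> : y^T *m z = (Umx^T *m y)^T *m (Umx^T *m z).
  by rewrite trmx_mul trmxK mulmxA -(mulmxA y^T) (mulmx1C Umx_orthogonal) mulmx1.
by rewrite mxE; apply: eq_bigr => i _; rewrite mxE !trmx_Umx_mulE.
Qed.

Lemma qf_Sigma_ucoord x : qf Sigma x = \sum_i sigma i * ucoord i x ^+ 2.
Proof.
by rewrite /qf -mulmxA dot_ucoord; apply: eq_bigr => i _; rewrite ucoord_Sigma; ring.
Qed.

Lemma qf_Sigma2_ucoord x : qf (Sigma *m Sigma) x = \sum_i sigma i ^+ 2 * ucoord i x ^+ 2.
Proof.
by rewrite /qf -mulmxA dot_ucoord; apply: eq_bigr => i _; rewrite ucoord_Sigma2; ring.
Qed.

Lemma unitmx_eigenbasis (H : 'M[R]_d) (h : 'I_d -> R) :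
  (forall k, H *m u k = h k *: u k) -> (forall k, h k != 0) -> H \in unitmx.
Proof.
move=> H_u h_neq0.
have HU : H *m Umx = Umx *m diag_mx (\row_k h k).
  apply/matrixP => r k; rewrite mul_mx_diag [RHS]mxE [X in _ = _ * X]mxE.
  have -> : (H *m Umx) r k = (H *m u k) r 0.
    by rewrite !mxE; apply: eq_bigr => l _; rewrite !mxE.
  by rewrite H_u mxE [Umx r k]mxE mulrC.
have hV : diag_mx (\row_k h k) *m diag_mx (\row_k (h k)^-1) = 1%:M.
  rewrite mulmx_diag; apply/matrixP => r k; rewrite !mxE.
  by case: eqVneq => [->|] //=; rewrite mulfV.
have : H *m (Umx *m diag_mx (\row_k (h k)^-1) *m Umx^T) = 1%:M.
  by rewrite !mulmxA HU -(mulmxA Umx) hV mulmx1 (mulmx1C Umx_orthogonal).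
by case/mulmx1_unit.
Qed.

End Eigenbasis.

Section RSoftCriticalPoints.
Variables (R : realType) (d : nat) (lam : R) (Sigma : 'M[R]_d).
Variables (sigma : 'I_d -> R) (u : 'I_d -> 'cV[R]_d).
Hypothesis lam_gt0 : 0 < lam.
Hypothesis Sigma_sym : Sigma^T = Sigma.
Hypothesis sigma_inj : injective sigma.
Hypothesis sigma_gt0 : forall i, 0 < sigma i.
Hypothesis Sigma_u : forall i, Sigma *m u i = sigma i *: u i.
Hypothesis u_norm : forall i, ((u i)^T *m u i) 0 0 = 1.
Local Notation S2 := (Sigma *m Sigma).
Local Notation f := (R_soft lam Sigma).
Local Notation c := (ucoord u).

Let ucoord_S := ucoord_Sigma Sigma_sym Sigma_u.
Let ucoord_S2 := ucoord_Sigma2 Sigma_sym Sigma_u.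
Let ucoord_uu := ucoord_u Sigma_sym sigma_inj Sigma_u u_norm.
Let qf_S_u := qf_Sigma_u Sigma_sym sigma_inj Sigma_u u_norm.
Let qf_S2_u := qf_Sigma2_u Sigma_sym sigma_inj Sigma_u u_norm.

Lemma R_soft_grad_u s j : R_soft_grad lam Sigma (s *: u j)
  = (4 * lam * s * sigma j ^+ 2 * (lam * sigma j * s ^+ 2 - 1)) *: u j.
Proof.
rewrite /R_soft_grad !qfZ qf_S_u qf_S2_u -!scalemxAr Sigma_u (Sigma2_u Sigma_u).
by rewrite !scalerA -scalerDl scalerA; congr (_ *: _); ring.
Qed.

Lemma ucoord_R_soft_grad i x : c i (R_soft_grad lam Sigma x)
  = 2 * lam * c i x * sigma i * ((lam * qf Sigma x - 2) * sigma i + lam * qf S2 x).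
Proof. by rewrite /R_soft_grad ucoordZ ucoordD !ucoordZ ucoord_S2 ucoord_S; ring. Qed.

Lemma qf_Sigma2_gt0 x : x != 0 -> 0 < qf S2 x.
Proof.
move=> /(ucoord_neq0 Sigma_sym sigma_inj Sigma_u u_norm) [j cj].
rewrite (qf_Sigma2_ucoord Sigma_sym sigma_inj Sigma_u u_norm) (bigD1 j) //=.
apply: ltr_wpDr; first by apply: sumr_ge0 => i _; rewrite mulr_ge0 ?sqr_ge0.
by apply: mulr_gt0; [exact: exprn_gt0 | rewrite exprn_even_gt0].
Qed.

Lemma R_soft_grad_eq0_eigen x : R_soft_grad lam Sigma x = 0 -> x != 0 ->
  exists j s, x = s *: u j.
Proof.
move=> grad0 x_neq0; have [j cj] := ucoord_neq0 Sigma_sym sigma_inj Sigma_u u_norm x_neq0.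
have lam_a_neq0 : lam * qf S2 x != 0 by rewrite mulf_neq0 ?gt_eqF ?qf_Sigma2_gt0.
have coef0 i : c i x != 0 -> (lam * qf Sigma x - 2) * sigma i + lam * qf S2 x = 0.
  move=> ci; move: (ucoord_R_soft_grad i x); rewrite grad0 ucoord0 => /esym/eqP.
  by rewrite !mulf_eq0 (negPf ci) (gt_eqF lam_gt0) (gt_eqF (sigma_gt0 i)) pnatr_eq0 /= => /eqP.
have others i : i != j -> c i x = 0.
  move=> ij; apply/eqP; apply: contraT => ci.
  have : (lam * qf Sigma x - 2) * (sigma i - sigma j) = 0.
    by rewrite mulrBr; move: (coef0 i ci) (coef0 j cj); lra.
  move/eqP; rewrite mulf_eq0 [_ - sigma j == 0]subr_eq0 (inj_eq sigma_inj) (negPf ij).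
  rewrite orbF => /eqP b0.
  by move: (coef0 j cj) lam_a_neq0; rewrite b0 mul0r add0r => ->; rewrite eqxx.
exists j, (c j x); rewrite {1}(ucoord_decomp Sigma_sym sigma_inj Sigma_u u_norm x) (bigD1 j) //=.
by rewrite big1 ?addr0 // => i ij; rewrite others ?scale0r.
Qed.

Lemma R_soft_critP x : critical_point f x <->
  x = 0 \/ exists j s, lam * sigma j * s ^+ 2 = 1 /\ x = s *: u j.
Proof.
rewrite /critical_point grad_R_soft //.
split=> [grad0 | [-> | [j [s [crit ->]]]]]; last 2 first.
- by rewrite /R_soft_grad !mulmx0 !scaler0 addr0 scaler0.
- by rewrite R_soft_grad_u crit subrr mulr0 scale0r.
have [-> | x_neq0] := eqVneq x 0; [by left | right].
have [j [s xE]] := R_soft_grad_eq0_eigen grad0 x_neq0.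
exists j, s; split=> //; move: grad0 x_neq0; rewrite xE R_soft_grad_u => /eqP.
rewrite !scaler_eq0 (negPf (u_neq0 u_norm j)) !orbF => + s_neq0.
rewrite (negPf s_neq0) (gt_eqF lam_gt0) (gt_eqF (sigma_gt0 j)) pnatr_eq0 /=.
by rewrite subr_eq0 => /eqP.
Qed.

Lemma R_soft_hess0_u k :
  R_soft_hess lam Sigma 0 *m u k = (- 4 * lam * sigma k ^+ 2) *: u k.
Proof.
rewrite /R_soft_hess !qf0 !mulmx0 !mul0mx addr0 scaler0 mulr0 scale0r !addr0.
by rewrite -!scalemxAl (Sigma2_u Sigma_u) !scalerA; congr (_ *: _); ring.
Qed.

Lemma R_soft_hess_u s j k : R_soft_hess lam Sigma (s *: u j) *m u k =
  (2 * lam * (lam * sigma j * s ^+ 2 * sigma k * (sigma k + sigma j) - 2 * sigma k ^+ 2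
              + (k == j)%:R * 4 * (lam * sigma j * s ^+ 2) * sigma j ^+ 2)) *: u k.
Proof.
rewrite /R_soft_hess !qfZ qf_S_u qf_S2_u -!scalemxAr Sigma_u (Sigma2_u Sigma_u).
rewrite !scalerA ![(_ *: u j)^T]linearZ /= -!scalemxAr -!scalemxAl !mulmxDl -!scalemxAl.
rewrite !scalerA -scalerDl -scalemxAl mul_col_trmx_mul -/(ucoord u j (u k)) ucoord_uu.
rewrite (Sigma2_u Sigma_u) Sigma_u !scalerA eq_sym.
case: eqVneq => [-> | _]; rewrite ?mulr0 ?scale0r ?addr0 -!scalerDl scalerA.
  by congr (_ *: _); ring.
by congr (_ *: _); rewrite mulr0n !mul0r addr0; ring.
Qed.

Lemma R_soft_hess_crit_u s j : lam * sigma j * s ^+ 2 = 1 -> forall k,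
  R_soft_hess lam Sigma (s *: u j) *m u k
  = (2 * lam * (sigma k * (sigma j - sigma k) + (k == j)%:R * 4 * sigma j ^+ 2)) *: u k.
Proof. by move=> crit k; rewrite R_soft_hess_u crit; congr (_ *: _); ring. Qed.

Lemma R_soft_crit_nondegenerate x : critical_point f x -> nondegenerate_crit f x.
Proof.
move=> x_crit; split=> //; rewrite hessian_R_soft // unitmx_tr.
have [-> | [j [s [crit ->]]]] := (R_soft_critP x).1 x_crit.
  apply: (unitmx_eigenbasis Sigma_sym sigma_inj Sigma_u u_norm R_soft_hess0_u) => k.
  by rewrite !mulf_neq0 ?oppr_eq0 ?pnatr_eq0 ?expf_neq0 ?gt_eqF.
apply: (unitmx_eigenbasis Sigma_sym sigma_inj Sigma_u u_norm (R_soft_hess_crit_u crit)).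
move=> k; case: (eqVneq k j) => [-> | kj].
  by rewrite subrr mulr0 add0r mul1r !mulf_neq0 ?expf_neq0 ?gt_eqF ?pnatr_eq0.
rewrite mul0r mul0r addr0 !mulf_neq0 ?pnatr_eq0 ?(gt_eqF lam_gt0) ?(gt_eqF (sigma_gt0 k)) //.
by rewrite subr_eq0 (inj_eq sigma_inj) eq_sym.
Qed.

Lemma R_soft_strict_local_max0 : strict_local_max f 0.
Proof.
have qf_cont0 : qf Sigma y @[y --> (0 : 'cV[R]_d)] --> qf Sigma 0.
  exact: continuous_qf.
near=> y => y_neq0.
have : lam * qf Sigma y < 1.
  rewrite -ltr_pdivlMl // mulr1.
  by near: y; apply: (cvgr_lt _ qf_cont0); rewrite qf0 invr_gt0.
have : 0 < lam * qf S2 y by rewrite mulr_gt0 ?qf_Sigma2_gt0.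
rewrite /R_soft !qf0; nra.
Unshelve. all: by end_near. Qed.

Lemma R_soft_global_min s j : lam * sigma j * s ^+ 2 = 1 ->
  (forall i, sigma i <= sigma j) -> global_min f (s *: u j).
Proof.
move=> crit top y.
have -> : f (s *: u j) = \tr Sigma - sigma j.
  rewrite /R_soft !qfZ qf_S_u qf_S2_u.
  transitivity (\tr Sigma + sigma j * (lam * sigma j * s ^+ 2) * (lam * sigma j * s ^+ 2 - 2)).
    by ring.
  by rewrite crit; ring.
rewrite /R_soft; set a := qf S2 y; set b := qf Sigma y.
have a_ge0 : 0 <= a.
  rewrite /a (qf_Sigma2_ucoord Sigma_sym sigma_inj Sigma_u u_norm).
  by apply: sumr_ge0 => i _; rewrite mulr_ge0 ?sqr_ge0.
have a_le : a <= sigma j * b.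
  rewrite /a /b (qf_Sigma2_ucoord Sigma_sym sigma_inj Sigma_u u_norm).
  rewrite (qf_Sigma_ucoord Sigma_sym sigma_inj Sigma_u u_norm) mulr_sumr.
  apply: ler_sum => i _; have := top i; have := sigma_gt0 i; have := sqr_ge0 (c i y).
  nra.
have : 0 <= sigma j * (lam ^+ 2 * (b * a) - 2 * lam * a + sigma j).
  have -> : sigma j * (lam ^+ 2 * (b * a) - 2 * lam * a + sigma j)
            = (lam * a - sigma j) ^+ 2 + lam ^+ 2 * a * (sigma j * b - a) by ring.
  apply: addr_ge0; first exact: sqr_ge0.
  by rewrite mulr_ge0 ?subr_ge0 // mulr_ge0 ?sqr_ge0.
rewrite pmulr_rge0 //; lra.
Qed.

Lemma R_soft_shift_u s i j h : i != j ->
  f (h *: u i + s *: u j) - f (s *: u j) = h ^+ 2 *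
    (lam * sigma i * (lam * sigma j * s ^+ 2 * (sigma j + sigma i) - 2 * sigma i)
     + h ^+ 2 * (lam ^+ 2 * sigma i ^+ 3)).
Proof.
move=> ij; rewrite /R_soft !qf_shift ?(Sigma2_sym Sigma_sym) // !bform_u.
rewrite -!scalemxAr Sigma_u (Sigma2_u Sigma_u) !ucoordZ ucoord_uu (negPf ij).
by rewrite !mulr0 !qfZ !qf_S_u !qf_S2_u; ring.
Qed.

Lemma R_soft_strict_saddle s j i : lam * sigma j * s ^+ 2 = 1 -> sigma j < sigma i ->
  strict_saddle f (s *: u j).
Proof.
move=> crit lt_ji; have ij : i != j by apply: contraTneq lt_ji => ->; rewrite ltxx.
have q1_lt0 : lam * sigma i * (sigma j - sigma i) < 0.
  by rewrite pmulr_rlt0 ?subr_lt0 ?mulr_gt0.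
split.
- by apply/R_soft_critP; right; exists j, s.
- exists (2 * lam * (sigma i * (sigma j - sigma i))); split; first by nra.
  apply/eigenvalueP; exists (u i)^T; last by rewrite trmx_eq0 (u_neq0 u_norm).
  rewrite hessian_R_soft // -trmx_mul (R_soft_hess_crit_u crit) (negPf ij).
  by rewrite mul0r mul0r addr0 linearZ.
- apply: (not_local_min_quartic (v := u i) (q3 := lam ^+ 2 * sigma i ^+ 3) q1_lt0) => h.
  by rewrite R_soft_shift_u // crit; congr (_ * (_ + _)); ring.
Qed.

End RSoftCriticalPoints.

Local Close Scope classical_set_scope.

Theorem proposition1 (R : realType) (d : nat) (lam : R) (Sigma : 'M[R]_d)
  (sigma : 'I_d -> R) (u : 'I_d -> 'cV[R]_d) :
  0 < lam ->
  Sigma^T = Sigma ->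
  (forall x : 'cV[R]_d, x != 0 -> 0 < qf Sigma x) ->
  (forall i j : 'I_d, (i < j)%N -> sigma j < sigma i) ->
  (forall i : 'I_d, 0 < sigma i) ->
  (forall i : 'I_d, Sigma *m u i = sigma i *: u i) ->
  (forall i : 'I_d, ((u i)^T *m u i) 0 0 = 1) ->
  let f := R_soft lam Sigma in
  let p := fun j : 'I_d => (Num.sqrt (lam * sigma j))^-1 *: u j in
  (forall mu, critical_point f mu -> nondegenerate_crit f mu) /\
  (forall mu, critical_point f mu <->
     (mu = 0 \/ exists j : 'I_d, mu = p j \/ mu = - p j)) /\
  strict_local_max f 0 /\
  (forall j : 'I_d, (0 < j)%N -> strict_saddle f (p j) /\ strict_saddle f (- p j)) /\
  (forall j : 'I_d, nat_of_ord j = 0%N -> global_min f (p j) /\ global_min f (- p j)).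
Proof.
(* Positive definiteness of [Sigma] already follows from [0 < sigma i]. *)
move=> lam_gt0 Sigma_sym _ sigma_decr sigma_gt0 Sigma_u u_norm f p.
have sigma_inj : injective sigma.
  move=> i j eq_ij; apply/eqP; apply: contraT; rewrite neq_ltn.
  by case/orP => /sigma_decr; rewrite eq_ij ltxx.
have p_crit j : lam * sigma j * ((Num.sqrt (lam * sigma j))^-1) ^+ 2 = 1.
  by apply/mulr_sqr_eq1P; [rewrite mulr_gt0 | left].
have Np_crit j : lam * sigma j * (- (Num.sqrt (lam * sigma j))^-1) ^+ 2 = 1.
  by rewrite sqrrN p_crit.
have p_N j : - p j = (- (Num.sqrt (lam * sigma j))^-1) *: u j by rewrite scaleNr.
split.
  exact: (R_soft_crit_nondegenerate lam_gt0 Sigma_sym sigma_inj sigma_gt0 Sigma_u u_norm).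
split.
  move=> mu; rewrite (R_soft_critP lam_gt0 Sigma_sym sigma_inj sigma_gt0 Sigma_u u_norm).
  split=> [[-> | [j [s [crit ->]]]] | [-> | [j [-> | ->]]]];
    [by left | right | by left | right | right].
  - exists j; rewrite p_N.
    by have [|->|->] := (mulr_sqr_eq1P _ _).1 crit; [rewrite mulr_gt0 | left | right].
  - by exists j, (Num.sqrt (lam * sigma j))^-1.
  - by rewrite p_N; exists j, (- (Num.sqrt (lam * sigma j))^-1).
split.
  exact: (R_soft_strict_local_max0 lam_gt0 Sigma_sym sigma_inj sigma_gt0 Sigma_u u_norm).
split=> j j_pos.
  have [i lt_ji] : exists i, sigma j < sigma i.
    by exists (Ordinal (ltn_trans j_pos (ltn_ord j))); apply: sigma_decr.
  have saddle := R_soft_strict_saddle lam_gt0 Sigma_sym sigma_inj sigma_gt0 Sigma_u u_norm.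
  by split; last rewrite p_N; [exact: saddle (p_crit j) lt_ji | exact: saddle (Np_crit j) lt_ji].
have top i : sigma i <= sigma j.
  have [i0 | i_pos] := posnP i; last by rewrite ltW ?sigma_decr ?j_pos.
  by rewrite (_ : i = j) //; apply: val_inj; rewrite /= i0 j_pos.
have gmin := R_soft_global_min Sigma_sym sigma_inj sigma_gt0 Sigma_u u_norm.
by split; last rewrite p_N; [exact: gmin (p_crit j) top | exact: gmin (Np_crit j) top].
Qed.
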